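(* In the two-block Spice setting, fix $t>0$ and run iterations $k=0,\dots,t$ with a constant scaling factor $\rho=\rho(t)>0$, where for every $k=1,\dots,t$ $$\eta_k\ \ge\ \max\Big\{\eta_{k-1}\sqrt{\tfrac{\mathsf{R}(u^k)}{\mathsf{R}(u^{k-1})}},\ \ \eta_{k-1}\,\tfrac{\mathsf{R}(\bar u^k)\sqrt{\mathsf{R}(u^{k-1})}}{\mathsf{R}(\bar u^{k-1})\sqrt{\mathsf{R}(u^k)}}\Big\}.$$ Define $\bar u_t=\frac{1}{t+1}\sum_{k=0}^t\bar u^k$, $\eta_t^{\mathrm{avg}}=\frac{t+1}{\sum_{k=0}^t1/\eta_k}$, $\bar w_t=\frac{\sum_{k=0}^t\bar w^k/\eta_k}{\sum_{k=0}^t1/\eta_k}$. Then $\bar w_t\in\Omega$ and for every $w^*=(x^*,y^*,\lambda^* )\in\Omega$ with $u^*=(x^*,y^* )$, $$\vartheta(\bar u_t)-\vartheta(u^* )+(\bar w_t-w^* )^\top\frac{1}{\eta_t^{\mathrm{avg}}\rho(t)}\Gamma(w^* )\ \le\ \frac{1}{2\eta_0\rho(t)(t+1)}\|w^*-w^0\|^2_{\mathsf{H}_0},$$ where $\mathsf{H}_0=\mathrm{diag}\big(\sqrt{\mathsf{R}(u^0)}I_n,\ \sqrt{\mathsf{R}(u^0)}I_m,\ \frac{\mu\mathsf{R}(\bar u^0)}{\sqrt{\mathsf{R}(u^0)}}I_p\big)$. In particular, for $\rho(t)=(t+1)^\alpha$ ($\alpha>0$), $\rho(t)=e^{\beta t}$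 ($\beta>0$), $\rho(t)=(t+1)^t$ the right-hand side equals $\frac{\|w^*-w^0\|^2_{\mathsf{H}_0}}{2\eta_0}$ divided by $(t+1)^{1+\alpha}$, $e^{\beta t}(t+1)$, $(t+1)^{t+1}$ respectively.
   Context: Two-block Spice setting. Let $\mathcal{X}\subseteq\mathbb{R}^n$, $\mathcal{Y}\subseteq\mathbb{R}^m$ be nonempty closed convex sets; $f:\mathbb{R}^n\to\mathbb{R}$, $g:\mathbb{R}^m\to\mathbb{R}$ convex; $\phi_1,\dots,\phi_p:\mathbb{R}^n\to\mathbb{R}$ and $\psi_1,\dots,\psi_p:\mathbb{R}^m\to\mathbb{R}$ convex and continuously differentiable; $\Phi=(\phi_1,\dots,\phi_p)^\top$, $\Psi=(\psi_1,\dots,\psi_p)^\top$ with Jacobians $\mathcal{D}\Phi(x)\in\mathbb{R}^{p\times n}$, $\mathcal{D}\Psi(y)\in\mathbb{R}^{p\times m}$. Let $\mathcal{Z}=\mathbb{R}^p_+$, $\Omega=\mathcal{X}\times\mathcal{Y}\times\mathcal{Z}$, $u=(x,y)$, $w=(x,y,\lambda)$, $\vartheta(u)=f(x)+g(y)$, $\Gamma(w)=(\mathcal{D}\Phi(x)^\top\lambda,\ \mathcal{D}\Psi(y)^\top\lambda,\ -\Phi(x)-\Psi(y))$. For symmetric $A$, $\|v\|_A^2:=v^\top Av$; matrix norms are spectral norms; $\mathsf{R}(u):=\|\mathcal{D}\Phi(x)\|^2+\|\mathcal{D}\Psi(y)\|^2$. Fix $\rho>0$, $\mu>1$, $w^0=(x^0,y^0,\lambda^0)\in\Omega$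 and positive $\eta_0,\eta_1,\dots$. Given $w^k=(x^k,y^k,\lambda^k)$, iteration $k$ is: $r_k=\frac{1}{\eta_k}\sqrt{\mathsf{R}(u^k)}$; $\bar x^k=\arg\min_{x\in\mathcal{X}}\{\rho f(x)+\frac{1}{\eta_k}(\lambda^k)^\top\Phi(x)+\frac{r_k}{2}\|x-x^k\|^2\}$; $\bar y^k=\arg\min_{y\in\mathcal{Y}}\{\rho g(y)+\frac{1}{\eta_k}(\lambda^k)^\top\Psi(y)+\frac{r_k}{2}\|y-y^k\|^2\}$; $\bar u^k=(\bar x^k,\bar y^k)$; $s_k=\frac{\mu\mathsf{R}(\bar u^k)}{\eta_k\sqrt{\mathsf{R}(u^k)}}$; $\bar\lambda^k=\arg\max_{\lambda\in\mathcal{Z}}\{\frac{1}{\eta_k}\lambda^\top[\Phi(\bar x^k)+\Psi(\bar y^k)]-\frac{s_k}{2}\|\lambda-\lambda^k\|^2\}=\max\{\lambda^k+\frac{1}{\eta_ks_k}(\Phi(\bar x^k)+\Psi(\bar y^k)),0\}$; $\bar w^k=(\bar x^k,\bar y^k,\bar\lambda^k)$; $w^{k+1}=w^k-M_k(w^k-\bar w^k)$ with $M_k=\begin{pmatrix}I_n&0&-\frac{1}{\eta_kr_k}\mathcal{D}\Phi(\bar x^k)^\top\\0&I_m&-\frac{1}{\eta_kr_k}\mathcal{D}\Psi(\bar y^k)^\top\\0&0&I_p\end{pmatrix}$. It is assumed that $\mathsf{R}(u^k)>0$, $\mathsf{R}(\bar u^k)>0$ for all $k$. Define $Q_k=\begin{pmatrix}r_kI_n&0&-\frac{1}{\eta_k}\mathcal{D}\Phi(\bar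 x^k)^\top\\0&r_kI_m&-\frac{1}{\eta_k}\mathcal{D}\Psi(\bar y^k)^\top\\0&0&s_kI_p\end{pmatrix}$, $H_k=\mathrm{diag}(r_kI_n,r_kI_m,s_kI_p)$, $G_k=\mathrm{diag}\big(r_kI_n,\ r_kI_m,\ s_kI_p-\frac{1}{\eta_k^2r_k}[\mathcal{D}\Phi(\bar x^k)\mathcal{D}\Phi(\bar x^k)^\top+\mathcal{D}\Psi(\bar y^k)\mathcal{D}\Psi(\bar y^k)^\top]\big)$. *)

From HB Require Import structures.
From mathcomp Require Import all_boot all_order all_algebra.
From mathcomp Require Import all_classical all_reals all_analysis.
Set Implicit Arguments. Unset Strict Implicit. Unset Printing Implicit Defensive.
Import Order.TTheory GRing.Theory Num.Theory.
Import numFieldNormedType.Exports.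
Local Open Scope classical_set_scope.
Local Open Scope ring_scope.

Definition dotv {R : realType} {n : nat} (u v : 'cV[R]_n) : R :=
  \sum_(i < n) u i 0 * v i 0.
Definition sqn {R : realType} {n : nat} (v : 'cV[R]_n) : R := dotv v v.
Definition enorm {R : realType} {n : nat} (v : 'cV[R]_n) : R := Num.sqrt (sqn v).

Definition specnorm {R : realType} {p n : nat} (A : 'M[R]_(p, n)) : R :=
  sup [set enorm (A *m v) | v in [set v : 'cV[R]_n | enorm v <= 1]].

Definition convex_set_cv {R : realType} {n : nat} (C : set 'cV[R]_n) : Prop :=
  forall x y, C x -> C y -> forall a : R, 0 <= a -> a <= 1 ->
    C (a *: x + (1 - a) *: y).
Definition convex_fun {R : realType} {n : nat} (h : 'cV[R]_n -> R) : Prop :=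
  forall x y (a : R), 0 <= a -> a <= 1 ->
    h (a *: x + (1 - a) *: y) <= a * h x + (1 - a) * h y.

Definition C1_with_jacobian {R : realType} {n p : nat}
    (F : 'cV[R]_n -> 'cV[R]_p) (DF : 'cV[R]_n -> 'M[R]_(p, n)) : Prop :=
  (forall x, differentiable F x /\
     forall v, ('d F x : 'cV[R]_n -> 'cV[R]_p) v = DF x *m v)
  /\ continuous DF.

Definition nonneg {R : realType} {p : nat} (l : 'cV[R]_p) : Prop :=
  forall i, 0 <= l i 0.

Definition posPart {R : realType} {p : nat} (v : 'cV[R]_p) : 'cV[R]_p :=
  \col_i Num.max (v i 0) 0.

Definition Rfun {R : realType} {n m p : nat}
    (DPhi : 'cV[R]_n -> 'M[R]_(p, n)) (DPsi : 'cV[R]_m -> 'M[R]_(p, m))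
    (x : 'cV[R]_n) (y : 'cV[R]_m) : R :=
  specnorm (DPhi x) ^+ 2 + specnorm (DPsi y) ^+ 2.

From HB Require Import structures.
From mathcomp Require Import all_boot all_order all_algebra.
From mathcomp Require Import all_classical all_reals all_analysis.
From mathcomp Require Import ring lra.
Import Order.TTheory GRing.Theory Num.Theory.
Import numFieldNormedType.Exports.
Local Open Scope classical_set_scope.
Local Open Scope ring_scope.
Set Implicit Arguments. Unset Strict Implicit. Unset Printing Implicit Defensive.

(* Against any w' = (x', y', l') in Omega, each iteration satisfies the one-step estimate
     rho (theta(ubar^k) - theta(u')) + (wbar^k - w')^T Gamma(w') / eta_k
       <= 1/2 ||w' - w^k||^2_{H_k} - 1/2 ||w' - w^{k+1}||^2_{H_k}.
   It comes from the first-order optimality of the two prox steps, the gradient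
   inequality for the convex constraint functions, the projection inequality of
   the dual step, and the bound ||DPhi^T d||^2 + ||DPsi^T d||^2 <= R(ubar) ||d||^2,
   which lets the dual weight s_k (built with mu > 1) absorb the correction step.
   The step-size rule makes r_k and s_k nonincreasing, so the estimates telescope to
   1/2 ||w' - w^0||^2_{H_0}; Jensen's inequality for theta and the affinity of the
   Gamma-term in wbar turn the sum into the ergodic bound. *)

Section InnerProduct.
Variables (R : realType) (n : nat).
Implicit Types (u v w : 'cV[R]_n) (a : R).

Lemma dotvC u v : dotv u v = dotv v u.
Proof. by apply: eq_bigr => i _; rewrite mulrC. Qed.

Lemma dotvDl u w v : dotv (u + w) v = dotv u v + dotv w v.
Proof. by rewrite /dotv -big_split; apply: eq_bigr => i _; rewrite mxE mulrDl. Qed.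

Lemma dotvDr u w v : dotv v (u + w) = dotv v u + dotv v w.
Proof. by rewrite dotvC dotvDl !(dotvC v). Qed.

Lemma dotvZl a u v : dotv (a *: u) v = a * dotv u v.
Proof. by rewrite /dotv mulr_sumr; apply: eq_bigr => i _; rewrite mxE mulrA. Qed.

Lemma dotvZr a u v : dotv v (a *: u) = a * dotv v u.
Proof. by rewrite dotvC dotvZl dotvC. Qed.

Lemma dotvNl u v : dotv (- u) v = - dotv u v.
Proof. by rewrite -scaleN1r dotvZl mulN1r. Qed.

Lemma dotvNr u v : dotv v (- u) = - dotv v u.
Proof. by rewrite dotvC dotvNl dotvC. Qed.

Lemma dotvBl u w v : dotv (u - w) v = dotv u v - dotv w v.
Proof. by rewrite dotvDl dotvNl. Qed.

Lemma dotvBr u w v : dotv v (u - w) = dotv v u - dotv v w.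
Proof. by rewrite dotvDr dotvNr. Qed.

Lemma dotv0l v : dotv 0 v = 0.
Proof. by rewrite /dotv big1 // => i _; rewrite mxE mul0r. Qed.

Lemma sqn_ge0 v : 0 <= sqn v.
Proof. by apply: sumr_ge0 => i _; rewrite -expr2 sqr_ge0. Qed.

Lemma sqn_eq0 v : sqn v = 0 -> v = 0.
Proof.
move=> /eqP; rewrite /sqn /dotv psumr_eq0 => [/allP v0|i _]; last first.
  by rewrite -expr2 sqr_ge0.
apply/matrixP => i j; rewrite (ord1 j) mxE.
by have := v0 i (mem_index_enum _); rewrite mulf_eq0 orbb => /eqP.
Qed.

Lemma sqnZ a v : sqn (a *: v) = a ^+ 2 * sqn v.
Proof. by rewrite /sqn dotvZl dotvZr mulrA expr2. Qed.

Lemma sqnN v : sqn (- v) = sqn v.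
Proof. by rewrite /sqn dotvNl dotvNr opprK. Qed.

Lemma sqnD u v : sqn (u + v) = sqn u + 2 * dotv u v + sqn v.
Proof. by rewrite /sqn !dotvDl !dotvDr (dotvC v u); ring. Qed.

Lemma dotv_three_point u v w :
  2 * dotv (u - w) (w - v) = sqn (u - v) - sqn (u - w) - sqn (w - v).
Proof.
have -> : u - v = (u - w) + (w - v) by rewrite addrA subrK.
by move: (u - w) (w - v) => A B; rewrite sqnD; ring.
Qed.

Lemma dotv_four_point u v w z :
  2 * dotv (u - w) (z - v) = sqn (u - v) - sqn (u - z) + sqn (z - w) - sqn (w - v).
Proof.
have -> : z - v = (z - w) + (w - v) by rewrite addrA subrK.
have -> : u - v = (u - w) + (w - v) by rewrite addrA subrK.
have -> : u - z = (u - w) + - (z - w) by rewrite opprB addrA subrK.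
move: (u - w) (w - v) (z - w) => A B C.
by rewrite !sqnD sqnN dotvDr dotvNr; ring.
Qed.

Lemma dotv_sqr_le u v : dotv u v ^+ 2 <= sqn u * sqn v.
Proof.
have [v0|v_gt0] := eqVneq (sqn v) 0.
  by rewrite (sqn_eq0 v0) dotvC dotv0l expr0n /= mulr_ge0 // sqn_ge0.
have := sqn_ge0 (sqn v *: u - dotv u v *: v).
rewrite /sqn !dotvBl !dotvBr !dotvZl !dotvZr (dotvC v u) -/(sqn u) -/(sqn v).
have := sqn_ge0 u; have := sqn_ge0 v; move: v_gt0; rewrite -/(sqn v); nra.
Qed.

End InnerProduct.

Lemma dotv_trmx (R : realType) p n (A : 'M[R]_(p, n)) u w :
  dotv u (A^T *m w) = dotv (A *m u) w.
Proof.
rewrite /dotv.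
under eq_bigr do rewrite mxE big_distrr /=.
under [RHS]eq_bigr do rewrite mxE big_distrl /=.
rewrite exchange_big; apply: eq_bigr => i _; apply: eq_bigr => j _.
by rewrite mxE; ring.
Qed.

Section SpectralNorm.
Variables (R : realType) (p n : nat).
Implicit Type A : 'M[R]_(p, n).

Lemma specnorm_has_ubound A :
  has_ubound [set enorm (A *m v) | v in [set v : 'cV[R]_n | enorm v <= 1]].
Proof.
exists (Num.sqrt (\sum_i (\sum_j `|A i j|) ^+ 2)) => _ [w w1 <-].
rewrite /enorm ler_sqrt; last by apply: sumr_ge0 => i _; rewrite sqr_ge0.
have wj j : `|w j 0| <= 1.
  have : w j 0 * w j 0 <= 1.
    move: w1; rewrite /= /enorm -{1}sqrtr1 ler_sqrt // => /(le_trans _); apply.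
    rewrite /sqn /dotv (bigD1 j) //= lerDl.
    by apply: sumr_ge0 => i _; rewrite -expr2 sqr_ge0.
  by rewrite ler_norml => wj2; apply/andP; split; nra.
apply: ler_sum => i _.
have Awi : `|(A *m w) i 0| <= \sum_j `|A i j|.
  rewrite mxE; apply: le_trans (ler_norm_sum _ _ _) _.
  by apply: ler_sum => j _; rewrite normrM ler_piMr.
apply: le_trans (_ : `|(A *m w) i 0| * `|(A *m w) i 0| <= _).
  by rewrite -normrM ler_norm.
by rewrite expr2 ler_pM.
Qed.

Lemma sqn_mulmx_le A v : sqn (A *m v) <= specnorm A ^+ 2 * sqn v.
Proof.
have [v0|v_gt0] := eqVneq (sqn v) 0.
  by rewrite (sqn_eq0 v0) mulmx0 /sqn !dotv0l mulr0.
have {}v_gt0 : 0 < sqn v by rewrite lt_def v_gt0 sqn_ge0.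
set e := enorm v.
have e2 : e ^+ 2 = sqn v by rewrite sqr_sqrtr // sqn_ge0.
have e_gt0 : 0 < e by rewrite sqrtr_gt0.
have unit_in : enorm (e^-1 *: v) <= 1.
  by rewrite /enorm sqnZ -e2 exprVn mulVf ?sqrtr1 // expf_eq0 /= gt_eqF.
have /(ub_le_sup (specnorm_has_ubound A)) : [set enorm (A *m v) | v in
    [set v : 'cV[R]_n | enorm v <= 1]] (enorm (A *m (e^-1 *: v))).
  by exists (e^-1 *: v).
rewrite -/(specnorm A) -scalemxAr => Av_le.
have : sqn (e^-1 *: (A *m v)) <= specnorm A ^+ 2.
  rewrite -[sqn _]sqr_sqrtr ?sqn_ge0 //.
  by apply: lerXn2r => //; rewrite ?nnegrE ?sqrtr_ge0 // (le_trans _ Av_le) // sqrtr_ge0.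
by rewrite sqnZ exprVn e2 => Av2; rewrite -ler_pdivrMr // mulrC.
Qed.

Lemma sqn_trmx_mulmx_le A d : sqn (A^T *m d) <= specnorm A ^+ 2 * sqn d.
Proof.
set w := A^T *m d.
have w2 : sqn w ^+ 2 <= sqn (A *m w) * sqn d.
  by rewrite {1}/sqn {2}/w dotv_trmx dotv_sqr_le.
have [w0|w_gt0] := eqVneq (sqn w) 0.
  by rewrite w0 mulr_ge0 ?sqr_ge0 ?sqn_ge0.
have {}w_gt0 : 0 < sqn w by rewrite lt_def w_gt0 sqn_ge0.
rewrite -(ler_pM2r w_gt0) -expr2 (le_trans w2) // mulrAC.
by rewrite ler_wpM2r ?sqn_ge0 ?sqn_mulmx_le.
Qed.

End SpectralNorm.

Lemma abs_dotv_le (R : realType) p (l v : 'cV[R]_p) :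
  `|dotv l v| <= (\sum_i `|l i 0|) * `|v|.
Proof.
rewrite /dotv mulr_suml; apply: le_trans (ler_norm_sum _ _ _) _.
apply: ler_sum => i _; rewrite normrM ler_wpM2l //.
have -> : `|v| = mx_norm v by [].
rewrite mx_normrE.
exact: (@le_bigmax _ _ _ 0 (fun ij : 'I_p * 'I_1 => `|v ij.1 ij.2|) (i, 0)).
Qed.

Section WeightedAverages.
Variables (R : realType) (n : nat).
Implicit Types (N : nat) (w : nat -> R) (v : nat -> 'cV[R]_n).

Lemma sum_nat_gt0 N w : (forall k, (k < N)%N -> 0 < w k) -> (0 < N)%N ->
  0 < \sum_(0 <= k < N) w k.
Proof.
case: N => // N w_gt0 _; apply: (lt_le_trans (w_gt0 0%N isT)).
rewrite big_nat_recl // lerDl big_nat_cond.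
by apply: sumr_ge0 => k /andP[/andP[_ kN] _]; rewrite ltW ?w_gt0.
Qed.

Lemma wavg_split (S a : R) (s u : 'cV[R]_n) : 0 < S -> 0 < a ->
  (S + a)^-1 *: (s + a *: u) =
  (S / (S + a)) *: (S^-1 *: s) + (1 - S / (S + a)) *: u.
Proof.
move=> S_gt0 a_gt0; have Sa : S + a != 0 by rewrite gt_eqF // addr_gt0.
by rewrite scalerDr !scalerA; congr (_ *: _ + _ *: _); field; rewrite ?Sa ?gt_eqF.
Qed.

Lemma wavg_coef_in01 (S a : R) : 0 < S -> 0 < a -> 0 <= S / (S + a) <= 1.
Proof.
move=> S_gt0 a_gt0; have Sa : 0 < S + a by rewrite addr_gt0.
apply/andP; split; first by rewrite divr_ge0 ?ltW.
by rewrite ler_pdivrMr // mul1r lerDl ltW.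
Qed.

Lemma convex_set_wavg (C : set 'cV[R]_n) N w v : convex_set_cv C ->
  (0 < N)%N -> (forall k, (k < N)%N -> 0 < w k) -> (forall k, (k < N)%N -> C (v k)) ->
  C ((\sum_(0 <= k < N) w k)^-1 *: \sum_(0 <= k < N) (w k *: v k)).
Proof.
move=> convC; elim: N => [//|[_ _ w_gt0 Cv|N IH _ w_gt0 Cv]].
  by rewrite !big_nat1 scalerA mulVf ?scale1r; [exact: Cv | rewrite gt_eqF ?w_gt0].
have w_gt0' k : (k < N.+1)%N -> 0 < w k by move=> kN; rewrite w_gt0 // ltnW.
have S_gt0 := sum_nat_gt0 w_gt0' isT; have a_gt0 := w_gt0 _ (ltnSn N.+1).
have [c0 c1] := andP (wavg_coef_in01 S_gt0 a_gt0).
rewrite 2?(big_nat_recr N.+1) //= wavg_split //.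
apply: convC => //; last exact: Cv.
by apply: IH => // k kN; apply: Cv; rewrite ltnW.
Qed.

Lemma convex_fun_wavg_le (h : 'cV[R]_n -> R) N w v : convex_fun h ->
  (0 < N)%N -> (forall k, (k < N)%N -> 0 < w k) ->
  h ((\sum_(0 <= k < N) w k)^-1 *: \sum_(0 <= k < N) (w k *: v k)) <=
  (\sum_(0 <= k < N) w k)^-1 * \sum_(0 <= k < N) (w k * h (v k)).
Proof.
move=> convh; elim: N => [//|[_ _ w_gt0|N IH _ w_gt0]].
  by rewrite !big_nat1 scalerA mulVf ?scale1r ?mulKf // gt_eqF ?w_gt0.
have w_gt0' k : (k < N.+1)%N -> 0 < w k by move=> kN; rewrite w_gt0 // ltnW.
have S_gt0 := sum_nat_gt0 w_gt0' isT; have a_gt0 := w_gt0 _ (ltnSn N.+1).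
have [c0 c1] := andP (wavg_coef_in01 S_gt0 a_gt0).
rewrite 3?(big_nat_recr N.+1) //= wavg_split //.
apply: le_trans (convh _ _ _ c0 c1) _.
apply: le_trans (lerD (ler_wpM2l c0 (IH isT w_gt0')) (lexx _)) _.
by rewrite le_eqVlt; apply/orP; left; apply/eqP; field; rewrite !gt_eqF // addr_gt0.
Qed.

Lemma convex_fun_avg_le (h : 'cV[R]_n -> R) N v : convex_fun h -> (0 < N)%N ->
  N%:R * h (N%:R^-1 *: \sum_(0 <= k < N) v k) <= \sum_(0 <= k < N) h (v k).
Proof.
move=> convh N_gt0; have NR_gt0 : 0 < N%:R :> R by rewrite ltr0n.
have := ler_wpM2l (ltW NR_gt0) (convex_fun_wavg_le v convh N_gt0 (fun _ _ => @ltr01 R)).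
rewrite sumr_const_nat subn0 mulrA mulfV ?mul1r ?gt_eqF //.
by rewrite (eq_bigr _ (fun k _ => scale1r (v k))) (eq_bigr _ (fun k _ => mul1r (h (v k)))).
Qed.

Lemma sum_dotv_wavg N w v (u a : 'cV[R]_n) : \sum_(0 <= k < N) w k != 0 ->
  \sum_(0 <= k < N) w k * dotv (v k - u) a =
  (\sum_(0 <= k < N) w k) *
    dotv ((\sum_(0 <= k < N) w k)^-1 *: \sum_(0 <= k < N) (w k *: v k) - u) a.
Proof.
move=> S0; rewrite -dotvZl scalerBr scalerA mulfV // scale1r.
rewrite (eq_bigr (fun k => dotv (w k *: (v k - u)) a)); last by move=> k _; rewrite dotvZl.
rewrite -(big_morph (dotv^~ a) (fun s t => dotvDl s t a) (dotv0l a)); congr dotv.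
by rewrite scaler_suml -sumrB; apply: eq_bigr => k _; rewrite scalerBr.
Qed.

End WeightedAverages.

Lemma scale_subr_addr (R : realType) n a (z x : 'cV[R]_n) :
  a *: (z - x) + x = a *: z + (1 - a) *: x.
Proof. by rewrite scalerBr scalerBl scale1r addrA addrAC. Qed.

Section FirstOrderConditions.
Variables (R : realType) (n p : nat).
Variables (F : 'cV[R]_n -> 'cV[R]_p) (DF : 'cV[R]_n -> 'M[R]_(p, n)).
Hypothesis F_C1 : C1_with_jacobian F DF.

Lemma diff_quotient_cvg x v :
  (fun a : R => a^-1 *: (F (a *: v + x) - F x)) @ 0^' --> DF x *m v.
Proof.
have [dF dFE] := F_C1.1 x.
have := deriveE v dF; rewrite dFE /derive => <-.
exact: diff_derivable.
Qed.

Lemma diff_quotient_lim_ge0 x v (l : 'cV[R]_p) (A K : R) :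
  (forall a, 0 < a -> a <= 1 ->
     0 <= A + dotv l (a^-1 *: (F (a *: v + x) - F x)) + K * a) ->
  0 <= A + dotv l (DF x *m v).
Proof.
move=> q_ge0; apply/ler_addgt0Pr => e e_gt0.
set L := \sum_i `|l i 0|.
have L_ge0 : 0 <= L by apply: sumr_ge0.
have eL_gt0 : 0 < e / (2 * (L + 1)) by rewrite divr_gt0 // mulr_gt0 // ltr_wpDl.
have := @diff_quotient_cvg x v.
move=> /cvgrPdist_lt /(_ _ eL_gt0) /nbhs_ballP [d /= d_gt0 near_q].
pose a := Num.min (d / 2) (Num.min 1 (e / (2 * (`|K| + 1)))).
have a_gt0 : 0 < a.
  by rewrite !lt_min ltr01 !divr_gt0 // mulr_gt0 // ltr_wpDl.
have a_le1 : a <= 1 by rewrite !ge_min lexx orbT.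
have Ka : a * (2 * (`|K| + 1)) <= e.
  by rewrite -ler_pdivlMr ?mulr_gt0 ?ltr_wpDl // !ge_min lexx !orbT.
set q := a^-1 *: (F (a *: v + x) - F x).
have close : `|DF x *m v - q| < e / (2 * (L + 1)).
  apply: near_q; last by rewrite gt_eqF.
  rewrite /ball /= sub0r normrN gtr0_norm // (@le_lt_trans _ _ (d / 2)) //.
    by rewrite ge_min lexx.
  by rewrite ltr_pdivrMr // ltr_pMr // ltr1n.
have Lclose : 2 * (L * `|DF x *m v - q|) <= e.
  rewrite ltr_pdivlMr ?mulr_gt0 ?ltr_wpDl // in close.
  by have := normr_ge0 (DF x *m v - q); nra.
have := abs_dotv_le l (DF x *m v - q); rewrite dotvBr ler_norml => /andP[lq _].
have Ka2 : 2 * (K * a) <= e by have := ler_norm K; nra.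
by have := q_ge0 a a_gt0 a_le1; rewrite -/q; move: lq; rewrite -/L; lra.
Qed.

Lemma convex_C1_dotv_le (l : 'cV[R]_p) x z :
  (forall i : 'I_p, convex_fun (fun w => F w i 0)) -> nonneg l ->
  dotv l (DF x *m (z - x)) <= dotv l (F z - F x).
Proof.
move=> convF l_ge0; rewrite -subr_ge0 -dotvNl.
apply: (diff_quotient_lim_ge0 (K := 0)) => a a_gt0 a_le1.
rewrite mul0r addr0 dotvNl subr_ge0; apply: ler_sum => i _.
apply: ler_wpM2l; first exact: l_ge0.
rewrite !mxE scale_subr_addr mulrC ler_pdivrMr //.
by have := convF i z x a (ltW a_gt0) a_le1; nra.
Qed.

Lemma prox_first_order (X : set 'cV[R]_n) (h : 'cV[R]_n -> R) (l : 'cV[R]_p)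
    (rho c r : R) x0 xb z :
  convex_set_cv X -> convex_fun h -> 0 <= rho -> X xb -> X z ->
  (forall z, X z -> rho * h xb + c * dotv l (F xb) + r / 2 * sqn (xb - x0)
     <= rho * h z + c * dotv l (F z) + r / 2 * sqn (z - x0)) ->
  0 <= rho * (h z - h xb) + c * dotv l (DF xb *m (z - xb)) + r * dotv (z - xb) (xb - x0).
Proof.
move=> convX convh rho_ge0 Xxb Xz xb_min.
rewrite addrAC -(dotvZl c).
apply: (diff_quotient_lim_ge0 (K := r / 2 * sqn (z - xb))) => a a_gt0 a_le1.
set v := z - xb; set xa := a *: v + xb; set q := a^-1 *: (F xa - F xb).
have hxa : h xa <= a * h z + (1 - a) * h xb.
  by rewrite /xa scale_subr_addr convh // ltW.
have Fxa : dotv l (F xa) = dotv l (F xb) + a * dotv l q.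
  by rewrite /q dotvZr mulrA mulfV ?gt_eqF // mul1r dotvBr addrC subrK.
have sqn_xa : sqn (xa - x0) = sqn (xb - x0) + 2 * a * dotv v (xb - x0) + a ^+ 2 * sqn v.
  have -> : xa - x0 = a *: v + (xb - x0) by rewrite addrA.
  by rewrite [LHS]sqnD sqnZ dotvZl; ring.
have Xxa : X xa by rewrite /xa scale_subr_addr; apply: convX => //; exact: ltW.
have := xb_min xa Xxa; rewrite Fxa sqn_xa dotvZl -(pmulr_rge0 _ a_gt0).
have := ler_wpM2l rho_ge0 hxa; nra.
Qed.

Lemma prox_correction_le (X : set 'cV[R]_n) (h : 'cV[R]_n -> R) (l0 lb ls : 'cV[R]_p)
    (rho c r k : R) x0 xb x1 xs :
  (forall i : 'I_p, convex_fun (fun z => F z i 0)) ->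
  convex_set_cv X -> convex_fun h -> 0 <= rho -> 0 <= c -> r * k = c ->
  nonneg lb -> nonneg ls -> X xb -> X xs ->
  (forall z, X z -> rho * h xb + c * dotv l0 (F xb) + r / 2 * sqn (xb - x0)
     <= rho * h z + c * dotv l0 (F z) + r / 2 * sqn (z - x0)) ->
  x1 = xb + k *: ((DF xb)^T *m (l0 - lb)) ->
  rho * (h xb - h xs) + c * dotv ls (DF xs *m (xb - xs))
  <= c * dotv (ls - lb) (F xb - F xs)
     + r / 2 * (sqn (xs - x0) - sqn (xs - x1) + sqn (x1 - xb) - sqn (xb - x0)).
Proof.
move=> convF convX convh rho_ge0 c_ge0 rk lb_ge0 ls_ge0 Xxb Xxs xb_min x1_def.
have opt := prox_first_order convX convh rho_ge0 Xxb Xxs xb_min.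
(* The correction step trades the multiplier [l0] of the prox step for [lb]. *)
have shift : r * dotv (xs - xb) (x1 - x0) = r * dotv (xs - xb) (xb - x0)
    + c * (dotv l0 (DF xb *m (xs - xb)) - dotv lb (DF xb *m (xs - xb))).
  have -> : x1 - x0 = (xb - x0) + k *: ((DF xb)^T *m (l0 - lb)).
    by rewrite x1_def addrAC.
  by rewrite dotvDr dotvZr dotv_trmx (dotvC (DF xb *m _)) (dotvBl l0) -rk; ring.
have four := dotv_four_point xs x0 xb x1.
have gb := ler_wpM2l c_ge0 (convex_C1_dotv_le xb xs convF lb_ge0).
have gs := ler_wpM2l c_ge0 (convex_C1_dotv_le xs xb convF ls_ge0).
move: opt shift four gb gs; rewrite !dotvBl !dotvBr; nra.
Qed.

End FirstOrderConditions.

Lemma posPart_nonneg (R : realType) p (z : 'cV[R]_p) : nonneg (posPart z).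
Proof. by move=> i; rewrite mxE le_max lexx orbT. Qed.

Lemma nonneg_convex (R : realType) p : convex_set_cv (@nonneg R p).
Proof.
move=> a b a_ge0 b_ge0 c c0 c1 i; rewrite !mxE.
by rewrite addr_ge0 // mulr_ge0 // ?subr_ge0 // ?a_ge0 ?b_ge0.
Qed.

(* [posPart z] is the projection of [z] onto the nonnegative orthant. *)
Lemma posPart_proj (R : realType) p (z l : 'cV[R]_p) : nonneg l ->
  0 <= dotv (l - posPart z) (posPart z - z).
Proof.
move=> l_ge0; apply: sumr_ge0 => i _; rewrite !mxE.
have [z_le0|z_gt0] := leP (z i 0) 0; last by rewrite subrr mulr0.
by rewrite subr0 sub0r mulr_ge0 // ?l_ge0 // oppr_ge0.
Qed.

Lemma posPart_step_le (R : realType) p (l0 lb ls v : 'cV[R]_p) (sigma : R) :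
  0 < sigma -> nonneg ls -> lb = posPart (l0 + sigma *: v) ->
  2 * dotv (ls - lb) v <= sigma^-1 * (sqn (ls - l0) - sqn (ls - lb) - sqn (lb - l0)).
Proof.
move=> sigma_gt0 ls_ge0 lb_def.
have := posPart_proj (l0 + sigma *: v) ls_ge0.
rewrite -lb_def opprD addrA dotvBr dotvZr subr_ge0 => proj.
rewrite -(dotv_three_point ls l0 lb) -(ler_pM2l sigma_gt0) mulVKf ?gt_eqF //.
lra.
Qed.

Lemma telescope_le (R : realDomainType) (T a b : nat -> R) t :
  (forall k, (k <= t)%N -> T k <= a k - b k) ->
  (forall k, (k < t)%N -> a k.+1 <= b k) -> 0 <= b t ->
  \sum_(0 <= k < t.+1) T k <= a 0%N.
Proof.
move=> Tab ab bt_ge0.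
suff sumT j : (j <= t)%N -> \sum_(0 <= k < j.+1) T k <= a 0%N - b j.
  by apply: le_trans (sumT t (leqnn t)) _; rewrite lerBlDr lerDl.
elim: j => [_|j IH jt]; first by rewrite big_nat1 Tab.
rewrite big_nat_recr //=; apply: le_trans (lerD (IH (ltnW jt)) (Tab _ jt)) _.
by have := ab j jt; lra.
Qed.

Section SpiceIteration.
Variables (R : realType) (n m p : nat).
Variables (X : set 'cV[R]_n) (Y : set 'cV[R]_m).
Variables (f : 'cV[R]_n -> R) (g : 'cV[R]_m -> R).
Variables (Phi : 'cV[R]_n -> 'cV[R]_p) (Psi : 'cV[R]_m -> 'cV[R]_p).
Variables (DPhi : 'cV[R]_n -> 'M[R]_(p, n)) (DPsi : 'cV[R]_m -> 'M[R]_(p, m)).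
Variables (rho mu : R) (eta : nat -> R).
Variables (x xb : nat -> 'cV[R]_n) (y yb : nat -> 'cV[R]_m) (lam lb : nat -> 'cV[R]_p).

Hypotheses (convX : convex_set_cv X) (convY : convex_set_cv Y).
Hypotheses (convf : convex_fun f) (convg : convex_fun g).
Hypothesis convPhi : forall i : 'I_p, convex_fun (fun z => Phi z i 0).
Hypothesis convPsi : forall i : 'I_p, convex_fun (fun z => Psi z i 0).
Hypotheses (Phi_C1 : C1_with_jacobian Phi DPhi) (Psi_C1 : C1_with_jacobian Psi DPsi).
Hypotheses (rho_gt0 : 0 < rho) (mu_gt1 : 1 < mu) (eta_gt0 : forall k, 0 < eta k).
Hypothesis R_gt0 : forall k, 0 < Rfun DPhi DPsi (x k) (y k).
Hypothesis Rb_gt0 : forall k, 0 < Rfun DPhi DPsi (xb k) (yb k).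

Let r k := (eta k)^-1 * Num.sqrt (Rfun DPhi DPsi (x k) (y k)).
Let s k := mu * Rfun DPhi DPsi (xb k) (yb k)
           / (eta k * Num.sqrt (Rfun DPhi DPsi (x k) (y k))).

Hypothesis xb_min : forall k, X (xb k) /\ forall z, X z ->
  rho * f (xb k) + (eta k)^-1 * dotv (lam k) (Phi (xb k)) + r k / 2 * sqn (xb k - x k)
  <= rho * f z + (eta k)^-1 * dotv (lam k) (Phi z) + r k / 2 * sqn (z - x k).
Hypothesis yb_min : forall k, Y (yb k) /\ forall z, Y z ->
  rho * g (yb k) + (eta k)^-1 * dotv (lam k) (Psi (yb k)) + r k / 2 * sqn (yb k - y k)
  <= rho * g z + (eta k)^-1 * dotv (lam k) (Psi z) + r k / 2 * sqn (z - y k).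
Hypothesis lb_def : forall k,
  lb k = posPart (lam k + (eta k * s k)^-1 *: (Phi (xb k) + Psi (yb k))).
Hypothesis x_next : forall k, x k.+1 = x k - ((x k - xb k)
  - (eta k * r k)^-1 *: ((DPhi (xb k))^T *m (lam k - lb k))).
Hypothesis y_next : forall k, y k.+1 = y k - ((y k - yb k)
  - (eta k * r k)^-1 *: ((DPsi (yb k))^T *m (lam k - lb k))).
Hypothesis lam_next : forall k, lam k.+1 = lam k - (lam k - lb k).

(* The left-hand side of the one-step estimate, before averaging over [k]. *)
Let gap k xs ys ls :=
  rho * (f (xb k) + g (yb k) - (f xs + g ys)) + (eta k)^-1 *
    (dotv (xb k - xs) ((DPhi xs)^T *m ls) + dotv (yb k - ys) ((DPsi ys)^T *m ls)
     + dotv (lb k - ls) (- Phi xs - Psi ys)).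

(* The paper's [||(xs, ys, ls) - (u, v, l)||^2_{H_k}]. *)
Let distH k (xs u : 'cV[R]_n) (ys v : 'cV[R]_m) (ls l : 'cV[R]_p) :=
  r k * sqn (xs - u) + r k * sqn (ys - v) + s k * sqn (ls - l).

Lemma r_gt0 k : 0 < r k.
Proof. by rewrite mulr_gt0 ?invr_gt0 ?sqrtr_gt0. Qed.

Lemma s_gt0 k : 0 < s k.
Proof. by rewrite divr_gt0 ?mulr_gt0 ?sqrtr_gt0 // (lt_trans ltr01). Qed.

Lemma lb_nonneg k : nonneg (lb k).
Proof. by rewrite lb_def; exact: posPart_nonneg. Qed.

Lemma x_nextE k :
  x k.+1 = xb k + (eta k * r k)^-1 *: ((DPhi (xb k))^T *m (lam k - lb k)).
Proof. by rewrite x_next opprB addrCA subKr addrC. Qed.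

Lemma y_nextE k :
  y k.+1 = yb k + (eta k * r k)^-1 *: ((DPsi (yb k))^T *m (lam k - lb k)).
Proof. by rewrite y_next opprB addrCA subKr addrC. Qed.

Lemma correction_le k :
  r k * sqn (x k.+1 - xb k) + r k * sqn (y k.+1 - yb k) <= s k * sqn (lb k - lam k).
Proof.
set d := lam k - lb k; set c := (eta k * r k)^-1.
set gx := (DPhi (xb k))^T *m d; set gy := (DPsi (yb k))^T *m d.
have K_gt0 : 0 < r k * c ^+ 2 by rewrite mulr_gt0 ?exprn_gt0 ?r_gt0 // invr_gt0 mulr_gt0 ?r_gt0.
have sE : s k = r k * c ^+ 2 * (mu * Rfun DPhi DPsi (xb k) (yb k)).
  by rewrite /s /c /r; field; rewrite !gt_eqF ?sqrtr_gt0.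
have -> : x k.+1 - xb k = c *: gx by rewrite x_nextE addrAC subrr add0r.
have -> : y k.+1 - yb k = c *: gy by rewrite y_nextE addrAC subrr add0r.
have -> : lb k - lam k = - d by rewrite opprB.
have -> : r k * sqn (c *: gx) + r k * sqn (c *: gy) = r k * c ^+ 2 * (sqn gx + sqn gy).
  by rewrite !sqnZ; ring.
rewrite sqnN sE -[X in _ <= X]mulrA ler_pM2l //.
apply: le_trans (lerD (sqn_trmx_mulmx_le _ d) (sqn_trmx_mulmx_le _ d)) _.
rewrite -mulrDl ler_wpM2r ?sqn_ge0 //.
by apply: ler_peMl; [exact: ltW (Rb_gt0 k) | exact: ltW].
Qed.

Lemma spice_step k xs ys ls : X xs -> Y ys -> nonneg ls ->
  gap k xs ys ls <= 1 / 2 * distH k xs (x k) ys (y k) ls (lam k)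
                    - 1 / 2 * distH k xs (x k.+1) ys (y k.+1) ls (lam k.+1).
Proof.
move=> Xxs Yys ls_ge0.
have c_ge0 : 0 <= (eta k)^-1 by rewrite invr_ge0 ltW.
have rc : r k * (eta k * r k)^-1 = (eta k)^-1.
  by rewrite invfM mulrCA mulfV ?mulr1 ?gt_eqF ?r_gt0.
have cs : (eta k)^-1 * ((eta k * s k)^-1)^-1 = s k.
  by rewrite invrK mulKf ?gt_eqF.
have px := prox_correction_le Phi_C1 convPhi convX convf (ltW rho_gt0) c_ge0 rc
  (lb_nonneg k) ls_ge0 (xb_min k).1 Xxs (xb_min k).2 (x_nextE k).
have py := prox_correction_le Psi_C1 convPsi convY convg (ltW rho_gt0) c_ge0 rc
  (lb_nonneg k) ls_ge0 (yb_min k).1 Yys (yb_min k).2 (y_nextE k).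
have sigma_gt0 : 0 < (eta k * s k)^-1 by rewrite invr_gt0 mulr_gt0 ?s_gt0.
have pl := ler_wpM2l c_ge0 (posPart_step_le sigma_gt0 ls_ge0 (lb_def k)).
rewrite [X in _ <= X]mulrA cs in pl.
have corr := correction_le k.
have := mulr_ge0 (ltW (r_gt0 k)) (sqn_ge0 (xb k - x k)).
have := mulr_ge0 (ltW (r_gt0 k)) (sqn_ge0 (yb k - y k)).
rewrite /gap /distH lam_next subKr !dotv_trmx !(dotvC _ ls).
move: px py pl corr; rewrite !(dotvBl, dotvBr, dotvDl, dotvDr, dotvNl, dotvNr).
lra.
Qed.

Lemma weights_nonincreasing k :
  Num.max
    (eta k * Num.sqrt (Rfun DPhi DPsi (x k.+1) (y k.+1) / Rfun DPhi DPsi (x k) (y k)))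
    (eta k * (Rfun DPhi DPsi (xb k.+1) (yb k.+1) * Num.sqrt (Rfun DPhi DPsi (x k) (y k)))
     / (Rfun DPhi DPsi (xb k) (yb k) * Num.sqrt (Rfun DPhi DPsi (x k.+1) (y k.+1))))
  <= eta k.+1 ->
  r k.+1 <= r k /\ s k.+1 <= s k.
Proof.
rewrite /r /s ge_max => /andP[].
move: (eta_gt0 k) (eta_gt0 k.+1) (R_gt0 k) (R_gt0 k.+1) (Rb_gt0 k) (Rb_gt0 k.+1).
move: (eta k) (eta k.+1) (Rfun _ _ (x k) _) (Rfun _ _ (x k.+1) _).
move: (Rfun _ _ (xb k) _) (Rfun _ _ (xb k.+1) _) => B0 B1 e0 e1 R0 R1.
move=> e0_gt0 e1_gt0 R0_gt0 R1_gt0 B0_gt0 B1_gt0.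
have [R0_ge0 R1_ge0] := (ltW R0_gt0, ltW R1_gt0).
rewrite sqrtrM // sqrtrV // => hr hs.
rewrite mulrA ler_pdivrMr ?sqrtr_gt0 // in hr.
rewrite ler_pdivrMr ?mulr_gt0 ?sqrtr_gt0 // in hs.
split; rewrite -subr_ge0.
  have -> : e0^-1 * Num.sqrt R0 - e1^-1 * Num.sqrt R1
      = (e1 * Num.sqrt R0 - e0 * Num.sqrt R1) / (e0 * e1).
    by field; rewrite !gt_eqF.
  apply: divr_ge0; first by rewrite subr_ge0.
  by rewrite mulr_ge0 // ltW.
have -> : mu * B0 / (e0 * Num.sqrt R0) - mu * B1 / (e1 * Num.sqrt R1)
    = mu * (e1 * (B0 * Num.sqrt R1) - e0 * (B1 * Num.sqrt R0))
      / (e0 * Num.sqrt R0 * (e1 * Num.sqrt R1)).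
  by field; rewrite !gt_eqF ?sqrtr_gt0.
have mu_ge0 : 0 <= mu by rewrite ltW // (lt_trans ltr01).
apply: divr_ge0; first by rewrite mulr_ge0 // subr_ge0.
by rewrite !mulr_ge0 ?sqrtr_ge0 // ltW.
Qed.

Let stepsize_rule t := forall k, (1 <= k <= t)%N ->
  Num.max
    (eta k.-1 * Num.sqrt (Rfun DPhi DPsi (x k) (y k) / Rfun DPhi DPsi (x k.-1) (y k.-1)))
    (eta k.-1 * (Rfun DPhi DPsi (xb k) (yb k) * Num.sqrt (Rfun DPhi DPsi (x k.-1) (y k.-1)))
     / (Rfun DPhi DPsi (xb k.-1) (yb k.-1) * Num.sqrt (Rfun DPhi DPsi (x k) (y k))))
  <= eta k.

Lemma spice_sum_le t xs ys ls : X xs -> Y ys -> nonneg ls -> stepsize_rule t ->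
  \sum_(0 <= k < t.+1) gap k xs ys ls <= 1 / 2 * distH 0 xs (x 0%N) ys (y 0%N) ls (lam 0%N).
Proof.
move=> Xxs Yys ls_ge0 stepsize.
apply: (telescope_le (T := fun k => gap k xs ys ls)
  (a := fun k => 1 / 2 * distH k xs (x k) ys (y k) ls (lam k))
  (b := fun k => 1 / 2 * distH k xs (x k.+1) ys (y k.+1) ls (lam k.+1))).
- by move=> k _; exact: spice_step.
- move=> k kt; have [r_le s_le] := weights_nonincreasing (stepsize k.+1 kt).
  have := ler_wpM2r (sqn_ge0 (xs - x k.+1)) r_le.
  have := ler_wpM2r (sqn_ge0 (ys - y k.+1)) r_le.
  have := ler_wpM2r (sqn_ge0 (ls - lam k.+1)) s_le.
  by rewrite /distH; lra.
- have := mulr_ge0 (ltW (r_gt0 t)) (sqn_ge0 (xs - x t.+1)).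
  have := mulr_ge0 (ltW (r_gt0 t)) (sqn_ge0 (ys - y t.+1)).
  have := mulr_ge0 (ltW (s_gt0 t)) (sqn_ge0 (ls - lam t.+1)).
  by rewrite /distH; lra.
Qed.

Lemma spice_ergodic_bound t xs ys ls : X xs -> Y ys -> nonneg ls -> stepsize_rule t ->
  let S := \sum_(0 <= k < t.+1) (eta k)^-1 in
  let xu := (t.+1%:R)^-1 *: \sum_(0 <= k < t.+1) xb k in
  let yu := (t.+1%:R)^-1 *: \sum_(0 <= k < t.+1) yb k in
  let xw := S^-1 *: \sum_(0 <= k < t.+1) ((eta k)^-1 *: xb k) in
  let yw := S^-1 *: \sum_(0 <= k < t.+1) ((eta k)^-1 *: yb k) in
  let lw := S^-1 *: \sum_(0 <= k < t.+1) ((eta k)^-1 *: lb k) in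
  let R0 := Rfun DPhi DPsi (x 0%N) (y 0%N) in
  (* [is_true] keeps the [let]s outside the boolean comparison. *)
  is_true (f xu + g yu - (f xs + g ys)
  + (t.+1%:R / S * rho)^-1 *
    (dotv (xw - xs) ((DPhi xs)^T *m ls) + dotv (yw - ys) ((DPsi ys)^T *m ls)
     + dotv (lw - ls) (- Phi xs - Psi ys))
  <= (2 * eta 0%N * rho * t.+1%:R)^-1 *
     (Num.sqrt R0 * sqn (xs - x 0%N) + Num.sqrt R0 * sqn (ys - y 0%N)
      + mu * Rfun DPhi DPsi (xb 0%N) (yb 0%N) / Num.sqrt R0 * sqn (ls - lam 0%N))).
Proof.
move=> Xxs Yys ls_ge0 stepsize S xu yu xw yw lw R0.
have S_gt0 : 0 < S by apply: sum_nat_gt0 => // k _; rewrite invr_gt0.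
have N_gt0 : 0 < t.+1%:R :> R by [].
have R0_gt0 : 0 < R0 := R_gt0 0.
have sum_le := spice_sum_le Xxs Yys ls_ge0 stepsize.
have avg_f := ler_wpM2l (ltW rho_gt0) (convex_fun_avg_le xb convf (ltn0Sn t)).
have avg_g := ler_wpM2l (ltW rho_gt0) (convex_fun_avg_le yb convg (ltn0Sn t)).
have S_neq0 : \sum_(0 <= k < t.+1) (fun k => (eta k)^-1) k != 0 by rewrite gt_eqF.
have /= Wx := sum_dotv_wavg xb xs ((DPhi xs)^T *m ls) S_neq0.
have /= Wy := sum_dotv_wavg yb ys ((DPsi ys)^T *m ls) S_neq0.
have /= Wl := sum_dotv_wavg lb ls (- Phi xs - Psi ys) S_neq0.
set G := dotv (xw - xs) _ + _ + _.
have sum_gap : \sum_(0 <= k < t.+1) gap k xs ys ls = rho *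
    (\sum_(0 <= k < t.+1) f (xb k) + \sum_(0 <= k < t.+1) g (yb k)
     - t.+1%:R * (f xs + g ys)) + S * G.
  rewrite /gap big_split /= -mulr_sumr sumrB big_split /= sumr_const_nat subn0 mulr_natl.
  rewrite (eq_bigr _ (fun k _ => mulrDr _ _ _)) big_split /=.
  by rewrite (eq_bigr _ (fun k _ => mulrDr _ _ _)) big_split /= Wx Wy Wl !mulrDr.
rewrite -(ler_pM2l (mulr_gt0 N_gt0 rho_gt0)).
have -> : t.+1%:R * rho * (f xu + g yu - (f xs + g ys) + (t.+1%:R / S * rho)^-1 * G)
    = rho * (t.+1%:R * f xu) + rho * (t.+1%:R * g yu) - t.+1%:R * rho * (f xs + g ys) + S * G.
  by field; rewrite !gt_eqF.
have -> : t.+1%:R * rho * ((2 * eta 0%N * rho * t.+1%:R)^-1 *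
     (Num.sqrt R0 * sqn (xs - x 0%N) + Num.sqrt R0 * sqn (ys - y 0%N)
      + mu * Rfun DPhi DPsi (xb 0%N) (yb 0%N) / Num.sqrt R0 * sqn (ls - lam 0%N)))
    = 1 / 2 * distH 0 xs (x 0%N) ys (y 0%N) ls (lam 0%N).
  rewrite /distH /r /s; field.
  by rewrite !gt_eqF ?sqrtr_gt0 ?eta_gt0 ?R0_gt0 // addrC natr1.
by move: sum_le avg_f avg_g; rewrite sum_gap; lra.
Qed.

End SpiceIteration.

Lemma ergodic_rhs_rate (R : realType) (e rho N H : R) : 0 < e -> 0 < rho -> 0 < N ->
  (2 * e * rho * N)^-1 * H = H / (2 * e) / (rho * N).
Proof. by move=> e_gt0 rho_gt0 N_gt0; field; rewrite !gt_eqF. Qed.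

Theorem theorem4p3 (R : realType) (n m p : nat)
  (X : set 'cV[R]_n) (Y : set 'cV[R]_m)
  (f : 'cV[R]_n -> R) (g : 'cV[R]_m -> R)
  (Phi : 'cV[R]_n -> 'cV[R]_p) (Psi : 'cV[R]_m -> 'cV[R]_p)
  (DPhi : 'cV[R]_n -> 'M[R]_(p, n)) (DPsi : 'cV[R]_m -> 'M[R]_(p, m))
  (rho mu : R) (eta : nat -> R)
  (x xb : nat -> 'cV[R]_n) (y yb : nat -> 'cV[R]_m) (lam lb : nat -> 'cV[R]_p)
  (t : nat) :
  X !=set0 -> closed X -> convex_set_cv X ->
  Y !=set0 -> closed Y -> convex_set_cv Y ->
  convex_fun f -> convex_fun g ->
  (forall i : 'I_p, convex_fun (fun z => Phi z i 0)) ->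
  (forall i : 'I_p, convex_fun (fun z => Psi z i 0)) ->
  C1_with_jacobian Phi DPhi -> C1_with_jacobian Psi DPsi ->
  0 < rho -> 1 < mu -> (forall k, 0 < eta k) ->
  X (x 0%N) -> Y (y 0%N) -> nonneg (lam 0%N) ->
  (forall k, 0 < Rfun DPhi DPsi (x k) (y k)) ->
  (forall k, 0 < Rfun DPhi DPsi (xb k) (yb k)) ->
  (* the iteration, with r_k and s_k written out *)
  let r k := (eta k)^-1 * Num.sqrt (Rfun DPhi DPsi (x k) (y k)) in
  let s k := mu * Rfun DPhi DPsi (xb k) (yb k)
             / (eta k * Num.sqrt (Rfun DPhi DPsi (x k) (y k))) in
  (forall k, X (xb k) /\ forall z, X z ->
     rho * f (xb k) + (eta k)^-1 * dotv (lam k) (Phi (xb k))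
       + r k / 2 * sqn (xb k - x k)
     <= rho * f z + (eta k)^-1 * dotv (lam k) (Phi z) + r k / 2 * sqn (z - x k)) ->
  (forall k, Y (yb k) /\ forall z, Y z ->
     rho * g (yb k) + (eta k)^-1 * dotv (lam k) (Psi (yb k))
       + r k / 2 * sqn (yb k - y k)
     <= rho * g z + (eta k)^-1 * dotv (lam k) (Psi z) + r k / 2 * sqn (z - y k)) ->
  (forall k, lb k = posPart (lam k + (eta k * s k)^-1 *: (Phi (xb k) + Psi (yb k)))) ->
  (* w^{k+1} = w^k - M_k (w^k - wbar^k), blockwise *)
  (forall k, x k.+1 = x k - ((x k - xb k)
       - (eta k * r k)^-1 *: ((DPhi (xb k))^T *m (lam k - lb k)))) ->
  (forall k, y k.+1 = y k - ((y k - yb k)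
       - (eta k * r k)^-1 *: ((DPsi (yb k))^T *m (lam k - lb k)))) ->
  (forall k, lam k.+1 = lam k - (lam k - lb k)) ->
  (0 < t)%N ->
  (forall k, (1 <= k <= t)%N ->
     Num.max
       (eta k.-1 * Num.sqrt (Rfun DPhi DPsi (x k) (y k)
                             / Rfun DPhi DPsi (x k.-1) (y k.-1)))
       (eta k.-1 * (Rfun DPhi DPsi (xb k) (yb k)
                    * Num.sqrt (Rfun DPhi DPsi (x k.-1) (y k.-1)))
        / (Rfun DPhi DPsi (xb k.-1) (yb k.-1)
           * Num.sqrt (Rfun DPhi DPsi (x k) (y k))))
     <= eta k) ->
  let S := \sum_(0 <= k < t.+1) (eta k)^-1 in
  let xu := (t.+1%:R)^-1 *: \sum_(0 <= k < t.+1) xb k in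
  let yu := (t.+1%:R)^-1 *: \sum_(0 <= k < t.+1) yb k in
  let eta_avg := t.+1%:R / S in
  let xw := S^-1 *: \sum_(0 <= k < t.+1) ((eta k)^-1 *: xb k) in
  let yw := S^-1 *: \sum_(0 <= k < t.+1) ((eta k)^-1 *: yb k) in
  let lw := S^-1 *: \sum_(0 <= k < t.+1) ((eta k)^-1 *: lb k) in
  let H0norm xs ys ls :=
    Num.sqrt (Rfun DPhi DPsi (x 0%N) (y 0%N)) * sqn (xs - x 0%N)
    + Num.sqrt (Rfun DPhi DPsi (x 0%N) (y 0%N)) * sqn (ys - y 0%N)
    + mu * Rfun DPhi DPsi (xb 0%N) (yb 0%N)
      / Num.sqrt (Rfun DPhi DPsi (x 0%N) (y 0%N)) * sqn (ls - lam 0%N) in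
  let RHS xs ys ls := (2 * eta 0%N * rho * t.+1%:R)^-1 * H0norm xs ys ls in
  (X xw /\ Y yw /\ nonneg lw) /\
  (forall xs ys ls, X xs -> Y ys -> nonneg ls ->
     f xu + g yu - (f xs + g ys)
     + (eta_avg * rho)^-1 *
       (dotv (xw - xs) ((DPhi xs)^T *m ls)
        + dotv (yw - ys) ((DPsi ys)^T *m ls)
        + dotv (lw - ls) (- Phi xs - Psi ys))
     <= RHS xs ys ls) /\
  (forall xs ys ls,
     (forall alpha : R, 0 < alpha -> rho = t.+1%:R `^ alpha ->
        RHS xs ys ls = H0norm xs ys ls / (2 * eta 0%N)
                       / t.+1%:R `^ (1 + alpha)) /\
     (forall beta : R, 0 < beta -> rho = expR (beta * t%:R) ->
        RHS xs ys ls = H0norm xs ys ls / (2 * eta 0%N)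
                       / (expR (beta * t%:R) * t.+1%:R)) /\
     (rho = t.+1%:R ^+ t ->
        RHS xs ys ls = H0norm xs ys ls / (2 * eta 0%N) / t.+1%:R ^+ t.+1)).
Proof.
move=> _ _ convX _ _ convY convf convg convPhi convPsi Phi_C1 Psi_C1 rho_gt0 mu_gt1 eta_gt0
  _ _ _ R_gt0 Rb_gt0 r s xb_min yb_min lb_def x_next y_next lam_next _ stepsize
  S xu yu eta_avg xw yw lw H0norm RHS.
have w_gt0 k : (k < t.+1)%N -> 0 < (eta k)^-1 by rewrite invr_gt0.
split.
  split; [|split].
  - by apply: convex_set_wavg => // k _; case: (xb_min k).
  - by apply: convex_set_wavg => // k _; case: (yb_min k).
  - apply: convex_set_wavg (@nonneg_convex R p) _ _ _ => // k _.
    by rewrite lb_def; exact: posPart_nonneg.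
split=> [xs ys ls Xxs Yys ls_ge0 | xs ys ls].
  exact: (spice_ergodic_bound (X := X) (Y := Y)).
rewrite /RHS /= ergodic_rhs_rate ?eta_gt0 //; split; [|split].
- move=> a a_gt0 ->; congr (_ / _).
  by rewrite powRD ?pnatr_eq0 ?implybT // powRr1 ?ler0n // mulrC.
- by move=> b b_gt0 ->.
- by move=> ->; rewrite exprSr.
Qed.
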